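(* Let $I$ be a finite tree and let $\Sigma_{i_1}\Sigma_{i_2}\cdots\Sigma_{i_p}$ be a reduced expression for a morphism of $R_0(I)$ from an arbitrary orientation of $I$ to $\Gamma_0$ or $\Gamma_0^{\mathrm{op}}$. Then for every letter $i$ occurring in the word $i_1\cdots i_p$, exactly one of the following holds: (i) no $j$ adjacent to $i$ occurs to the left of the leftmost occurrence of $i$; (ii) every $j$ adjacent to $i$ occurs exactly once to the left of the leftmost occurrence of $i$.
   Context: Let $I$ be a finite tree. $\mathrm{Quiv}(I)$ is the set of orientations of $I$; $\Gamma_0$ is an alternating orientation (every vertex a source or sink) and $\Gamma_0^{\mathrm{op}}$ its opposite. For $\Gamma\in\mathrm{Quiv}(I)$ and a source or sink $i$ of $\Gamma$, $s_i\Gamma$ is the orientation obtained by reversing all arrows at $i$. The groupoid $R_0(I)$ has object set $\mathrm{Quiv}(I)$ and is generated by elementary isomorphisms $\Sigma_i:\Gamma\to s_i\Gamma$ (for each $\Gamma$ and each source or sink $i$ of $\Gamma$) subject to the relations, whenever both sides are defined: (R1) $\Sigma_i^2=1$; (R2) $\Sigma_i\Sigma_j=\Sigma_j\Sigma_i$ when $i,j$ are not adjacent. Composition is right-to-left, so in $\Sigma_{i_1}\cdots\Sigma_{i_p}$ the rightmost factor $\Sigma_{i_p}$ is applied first and the leftmost factor $\Sigma_{i_1}$ last. An expression for a morphism $\Sigma$ is a composable word equal to $\Sigma$; $\ell(\Sigma)$ is the minimal length of an expression, and an expression of length $\ell(\Sigma)$ is called reduced. *)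

From Stdlib Require Import Relations.
From mathcomp Require Import all_boot.
Set Implicit Arguments. Unset Strict Implicit. Unset Printing Implicit Defensive.

Section Quivers.
Variables (V : finType) (adj : rel V).

(** A finite tree: the graph (V, adj) is simple (symmetric, irreflexive),
    connected and has no cycle (a cycle = closed path through >= 3 distinct
    vertices). *)
Definition is_tree : Prop :=
  [/\ symmetric adj, irreflexive adj,
      (forall x y, connect adj x y) &
      (forall x p, path adj x p -> uniq (x :: p) -> 2 <= size p ->
                   ~~ adj (last x p) x)].

(** A (candidate) quiver on V: o (x,y) = true means there is an arrow x -> y. *)
Definition quiv := {ffun V * V -> bool}.

Definition is_orient (o : quiv) : Prop :=
  (forall x y, o (x, y) -> adj x y) /\
  (forall x y, adj x y -> o (x, y) != o (y, x)).

Definition is_source (o : quiv) (i : V) : bool := [forall j, adj i j ==> o (i, j)].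
Definition is_sink (o : quiv) (i : V) : bool := [forall j, adj i j ==> o (j, i)].
Definition src_or_sink (o : quiv) (i : V) : bool := is_source o i || is_sink o i.

Definition refl_at (o : quiv) (i : V) : quiv :=
  [ffun p : V * V => if (p.1 == i) || (p.2 == i) then o (p.2, p.1) else o p].

Definition opp (o : quiv) : quiv := [ffun p : V * V => o (p.2, p.1)].

Definition alternating (o : quiv) : Prop := forall i, src_or_sink o i.

(** Words: the list [:: i_1; ...; i_p] stands for Sigma_{i_1} ... Sigma_{i_p};
    composition is right-to-left, so i_p is applied first.  [run o w] is
    [Some] of the target orientation if the word is composable starting at o,
    and [None] otherwise. *)
Fixpoint run (o : quiv) (w : seq V) : option quiv :=
  match w with
  | [::] => Some o
  | i :: w' =>
      match run o w' with
      | Some o' => if src_or_sink o' i then Some (refl_at o' i) else None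
      | None => None
      end
  end.

Definition composable (o : quiv) (w : seq V) : bool := run o w != None.

Inductive rstep (G : quiv) : seq V -> seq V -> Prop :=
  | rstep_R1 w1 w2 i :
      composable G (w1 ++ [:: i; i] ++ w2) ->
      composable G (w1 ++ w2) ->
      rstep G (w1 ++ [:: i; i] ++ w2) (w1 ++ w2)
  | rstep_R2 w1 w2 i j :
      ~~ adj i j ->
      composable G (w1 ++ [:: i; j] ++ w2) ->
      composable G (w1 ++ [:: j; i] ++ w2) ->
      rstep G (w1 ++ [:: i; j] ++ w2) (w1 ++ [:: j; i] ++ w2).

Definition same_morph (G : quiv) : relation (seq V) :=
  clos_refl_sym_trans (seq V) (rstep G).

Definition reduced (G : quiv) (w : seq V) : Prop :=
  composable G w /\
  forall w', composable G w' -> same_morph G w w' -> size w <= size w'.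

End Quivers.

(* Let w = pre ++ i :: suf with i not in pre, and let F = run w be alternating.
   Two things constrain pre.  First, a parity argument: i is a source or sink
   just after Sigma_i is applied and again in F, and in between the arrow from
   i to a neighbour j is reversed once per occurrence of j in pre, so all
   neighbours of i occur in pre with the same parity.  Second, in a reduced
   word every neighbour of a letter j occurs between two consecutive
   occurrences of j: otherwise, descending to the innermost repeated neighbour
   of j, either the parity argument applied to j gives a contradiction, or all
   letters between the two j's commute with j and (R2) then (R1) shorten the
   word.  Hence no neighbour j of i occurs twice in pre (i would occur between),
   so all neighbours occur 0 times or all occur once; a tree with at least two
   vertices has no isolated vertex, so these alternatives exclude each other. *)
From Stdlib Require Import Relations.
From mathcomp Require Import all_boot zify.
Set Implicit Arguments. Unset Strict Implicit. Unset Printing Implicit Defensive.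

Lemma split_first_occurrence (T : eqType) (k : T) (s : seq T) : k \in s ->
  exists s1 s2, s = s1 ++ k :: s2 /\ k \notin s1.
Proof.
move=> ks; exists (take (index k s) s), (drop (index k s).+1 s).
by rewrite -drop_index // cat_take_drop in_take_leq ?index_size ?ltnn.
Qed.

Lemma split_consecutive (T : eqType) (k : T) (s : seq T) : 1 < count_mem k s ->
  exists s1 s2 s3, s = s1 ++ k :: s2 ++ k :: s3 /\ k \notin s2.
Proof.
move=> ck; have ks : k \in s by rewrite -has_pred1 has_count ltnW.
have [s1 [r [Es ks1]]] := split_first_occurrence ks.
have kr : k \in r.
  by move: ck; rewrite Es count_cat (count_memPn ks1) /= eqxx -has_pred1 has_count.
have [s2 [s3 [Er ks2]]] := split_first_occurrence kr.
by exists s1, s2, s3; rewrite Es Er.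
Qed.

Section Reflections.
Variables (V : finType) (adj : rel V).
Implicit Types (o : quiv V) (u v : seq V).

Lemma run_cat o u v : run adj o (u ++ v) = obind (run adj ^~ u) (run adj o v).
Proof.
elim: u => [|x u IH] /=; first by case: (run adj o v).
by rewrite IH; case: (run adj o v).
Qed.

Lemma run_letter o o' u x v : run adj o (u ++ x :: v) = Some o' ->
  exists2 o1, run adj o v = Some o1 /\ src_or_sink adj o1 x &
              run adj (refl_at o1 x) u = Some o'.
Proof.
rewrite run_cat /=; case: (run adj o v) => //= o1.
by case: ifP => //= sos1 Ro'; exists o1.
Qed.

Lemma refl_atK o i : refl_at (refl_at o i) i = o.
Proof.
by apply/ffunP => -[x y]; rewrite !ffunE /=; case: (x == i) (y == i) => [] [].
Qed.

Lemma refl_atC o i j : refl_at (refl_at o j) i = refl_at (refl_at o i) j.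
Proof.
apply/ffunP => -[x y]; rewrite !ffunE /=.
by case: (x == j) (y == j) (x == i) (y == i) => [] [] [] [].
Qed.

Lemma is_source_refl_at o i : is_source adj (refl_at o i) i = is_sink adj o i.
Proof. by apply: eq_forallb => k; rewrite ffunE /= eqxx. Qed.

Lemma is_sink_refl_at o i : is_sink adj (refl_at o i) i = is_source adj o i.
Proof. by apply: eq_forallb => k; rewrite ffunE /= eqxx orbT. Qed.

Lemma src_or_sink_refl_at o i : src_or_sink adj (refl_at o i) i = src_or_sink adj o i.
Proof. by rewrite /src_or_sink is_source_refl_at is_sink_refl_at orbC. Qed.

Lemma src_or_sink_opp o i : src_or_sink adj (opp o) i = src_or_sink adj o i.
Proof.
rewrite /src_or_sink orbC; congr orb; apply: eq_forallb => k; by rewrite ffunE.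
Qed.

Lemma src_or_sink_refl_at_nonadj o i j :
  ~~ adj i j -> src_or_sink adj (refl_at o j) i = src_or_sink adj o i.
Proof.
have [-> _|nij nadj] := eqVneq i j; first exact: src_or_sink_refl_at.
rewrite /src_or_sink; congr orb; apply: eq_forallb => k;
rewrite ffunE /= (negbTE nij) /=; have [->|] := eqVneq k j; by rewrite ?(negbTE nadj).
Qed.

Lemma run_cancel o u v j : composable adj o (u ++ [:: j, j & v]) ->
  run adj o (u ++ [:: j, j & v]) = run adj o (u ++ v).
Proof.
rewrite /composable !(run_cat _ u) /=; case: (run adj o v) => //= o1.
by case: ifP => //= sos1; rewrite src_or_sink_refl_at sos1 refl_atK.
Qed.

(* Each Sigma_a reverses the arrows at a, so the pair (x, y) is reversed once
   per occurrence of x or y. *)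
Lemma run_arrow o o' u x y : run adj o u = Some o' ->
  o' (x, y) = if odd (count_mem x u + count_mem y u) then o (y, x) else o (x, y).
Proof.
elim: u o' x y => [|a u IH] o' x y /=; first by case=> <-.
case Ru: (run adj o u) => [o1|] //; case: ifP => // _ [<-].
rewrite ffunE /= !(IH o1) // (addnC (count_mem y u)).
have [<-|xa] := eqVneq a x; have [<-|ya] := eqVneq a y; rewrite ?eqxx /=;
  rewrite ?(eq_sym x) ?(eq_sym y) ?(negbTE xa) ?(negbTE ya) /= ?addSn ?addnS ?add0n ?if_same //=;
  by case: odd.
Qed.

Lemma is_orient_arrow_rev o x y : is_orient adj o -> adj x y -> o (y, x) = ~~ o (x, y).
Proof. by case=> _ Oo /Oo; case: (o (x, y)) (o (y, x)) => [] []. Qed.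

Lemma src_or_sink_arrow_eq o x a b : is_orient adj o -> src_or_sink adj o x ->
  adj x a -> adj x b -> o (x, a) = o (x, b).
Proof.
move=> Oo /orP[] /forallP sx xa xb; have := implyP (sx a) xa; have := implyP (sx b) xb.
- by move=> -> ->.
- by rewrite (is_orient_arrow_rev Oo xa) (is_orient_arrow_rev Oo xb) => /negbTE -> /negbTE ->.
Qed.

(* At a source or sink all arrows at x point the same way, and the arrow to a
   neighbour a is reversed count_mem a u times. *)
Lemma src_or_sink_parity o o' u x a b :
  is_orient adj o -> is_orient adj o' -> run adj o u = Some o' -> x \notin u ->
  src_or_sink adj o x -> src_or_sink adj o' x -> adj x a -> adj x b ->
  odd (count_mem a u) = odd (count_mem b u).
Proof.
move=> Oo Oo' Ru /count_memPn xu so so' xa xb.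
have flip k : adj x k -> o' (x, k) = odd (count_mem k u) (+) o (x, k).
  move=> xk; rewrite (run_arrow _ _ Ru) xu (is_orient_arrow_rev Oo xk).
  by case: (odd _).
have := src_or_sink_arrow_eq Oo' so' xa xb.
by rewrite !flip // (src_or_sink_arrow_eq Oo so xa xb) => /addIb.
Qed.

Hypothesis adj_sym : symmetric adj.

Lemma is_orient_refl_at o i : is_orient adj o -> is_orient adj (refl_at o i).
Proof.
case=> O1 O2; split=> x y; rewrite !ffunE /=.
- by case: ifP => _ /O1 //; rewrite adj_sym.
- rewrite [(y == i) || _]orbC => /O2 xy; case: ifP => // _; by rewrite eq_sym.
Qed.

Lemma run_orient o o' u : is_orient adj o -> run adj o u = Some o' -> is_orient adj o'.
Proof.
elim: u o' => [|x u IH] o' Oo /=; first by case=> <-.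
case Ru: (run adj o u) => [o1|] //; case: ifP => // _ [<-].
exact/is_orient_refl_at/(IH o1).
Qed.

Lemma run_swap o u v i j : ~~ adj i j ->
  run adj o (u ++ [:: i, j & v]) = run adj o (u ++ [:: j, i & v]).
Proof.
move=> nij; have nji : ~~ adj j i by rewrite adj_sym.
rewrite !(run_cat _ u) /=; congr obind; case: (run adj o v) => //= o1.
case: (boolP (src_or_sink adj o1 i)) => soi; case: (boolP (src_or_sink adj o1 j)) => soj;
  by rewrite ?src_or_sink_refl_at_nonadj ?(negbTE soi) ?(negbTE soj) ?soi ?soj // refl_atC.
Qed.

Lemma run_commute o j b u v : all (fun x => ~~ adj j x) b ->
  run adj o (u ++ j :: b ++ v) = run adj o (u ++ b ++ j :: v).
Proof.
elim: b u => [|x b IH] u //= /andP[njx njb].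
by rewrite (run_swap _ _ _ njx) -cat_rcons IH // cat_rcons.
Qed.

Section Reduced.
Variable G : quiv V.

Lemma same_morph_commute j b u v : all (fun x => ~~ adj j x) b ->
  composable adj G (u ++ j :: b ++ v) ->
  same_morph adj G (u ++ j :: b ++ v) (u ++ b ++ j :: v).
Proof.
elim: b u => [|x b IH] u /=; first by move=> _ _; apply: rst_refl.
move=> /andP[njx njb] Cw.
have Cw' : composable adj G (u ++ [:: x, j & b ++ v]).
  by rewrite /composable -run_swap.
apply: rst_trans; first exact: rst_step (rstep_R2 njx Cw Cw').
by have := IH (rcons u x) njb; rewrite !cat_rcons; apply.
Qed.

Lemma reduced_commuting_repeat u j b v : all (fun x => ~~ adj j x) b ->
  ~ reduced adj G (u ++ j :: b ++ j :: v).
Proof.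
move=> njb [Cw minw].
have Ecomm := @run_commute G j b u (j :: v) njb.
have Cjj : composable adj G ((u ++ b) ++ [:: j, j & v]).
  by rewrite /composable -catA /= -Ecomm.
have Cshort : composable adj G ((u ++ b) ++ v) by rewrite /composable -(run_cancel Cjj).
have Rshort : same_morph adj G (u ++ j :: b ++ j :: v) ((u ++ b) ++ v).
  apply: rst_trans; first exact: same_morph_commute njb Cw.
  by rewrite -catA; apply: rst_step; move: (rstep_R1 Cjj Cshort); rewrite -!catA.
by have := minw _ Cshort Rshort; rewrite !size_cat /= size_cat /=; lia.
Qed.

Hypothesis G_orient : is_orient adj G.

Lemma parity_after_reflection u x v o' a b : run adj G (u ++ x :: v) = Some o' ->
  src_or_sink adj o' x -> x \notin u -> adj x a -> adj x b ->
  odd (count_mem a u) = odd (count_mem b u).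
Proof.
move=> Rw sos' xu xa xb; have [o1 [Rv sos1] Ru] := run_letter Rw.
have O1 : is_orient adj (refl_at o1 x) by apply/is_orient_refl_at/(run_orient G_orient Rv).
apply: (src_or_sink_parity O1 (run_orient O1 Ru) Ru xu _ sos' xa xb).
by rewrite src_or_sink_refl_at.
Qed.

Lemma repeat_parity u j b v i k : composable adj G (u ++ j :: b ++ j :: v) ->
  j \notin b -> adj j i -> adj j k -> odd (count_mem i b) = odd (count_mem k b).
Proof.
rewrite /composable; case Rw: run => [o'|] // _.
have [o3 [Rb sos3] _] := run_letter Rw.
exact: parity_after_reflection Rb sos3.
Qed.

(* Induction on the gap b: if no neighbour of j occurs in b the word shortens;
   a neighbour k occurring an odd number of times forces i into b by parity;
   one occurring an even number of times bounds a strictly smaller gap. *)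
Lemma reduced_neighbor_between u j b v i : reduced adj G (u ++ j :: b ++ j :: v) ->
  j \notin b -> adj j i -> i \in b.
Proof.
have [n] := ubnP (size b); elim: n => // n IH in u j b v i *; rewrite ltnS => sb Rw jb ji.
have [nj|] := boolP (all (fun x => ~~ adj j x) b).
  by case: (reduced_commuting_repeat nj Rw).
rewrite -has_predC => /hasP[k kb /negbNE jk].
have [oddk|evenk] := boolP (odd (count_mem k b)).
  rewrite -has_pred1 has_count lt0n; apply: contraTneq oddk => ci.
  by rewrite -(repeat_parity Rw.1 jb ji jk) ci.
have ck : 1 < count_mem k b.
  by move: kb evenk; rewrite -has_pred1 has_count; case: count => [|[|]].
have [b1 [b2 [b3 [Eb kb2]]]] := split_consecutive ck.
have Ew : u ++ j :: b ++ j :: v = (u ++ j :: b1) ++ k :: b2 ++ k :: b3 ++ j :: v.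
  by rewrite Eb -!catA /= -!catA.
have sb2 : size b2 < n by move: sb; rewrite Eb !size_cat /= size_cat /=; lia.
move: Rw; rewrite Ew => /(IH _ _ _ _ j sb2) /(_ kb2); rewrite adj_sym => /(_ jk) jb2.
by move: jb; rewrite Eb !(mem_cat, inE) jb2 !orbT.
Qed.

Lemma reduced_count_before_first u x v j : reduced adj G (u ++ x :: v) ->
  x \notin u -> adj x j -> count_mem j u <= 1.
Proof.
move=> Rw xu xj; rewrite leqNgt; apply/negP => /split_consecutive[u1 [u2 [u3 [Eu ju2]]]].
have jx : adj j x by rewrite adj_sym.
move: Rw; rewrite Eu -!catA /= -catA => /reduced_neighbor_between /(_ ju2 jx) xu2.
by move: xu; rewrite Eu !(mem_cat, inE) xu2 !orbT.
Qed.

End Reduced.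
End Reflections.

Lemma connected_has_neighbor (V : finType) (adj : rel V) (i : V) :
  (forall x y, connect adj x y) -> 1 < #|V| -> exists j, adj i j.
Proof.
move=> conn /card_gt1P[x [y [_ _ nxy]]].
have [z zi] : exists z, z != i.
  by have [xi|] := eqVneq x i; [exists y; rewrite -xi eq_sym | exists x].
have /connectP[[|j p] /=] := conn i z; first by move=> _ ezi; rewrite ezi eqxx in zi.
by case/andP=> ij _ _; exists j.
Qed.

Theorem mainTheorem17 (V : finType) (adj : rel V) (G G0 : quiv V) (w : seq V) :
  is_tree adj -> 1 < #|V| ->
  is_orient adj G -> is_orient adj G0 -> alternating adj G0 ->
  reduced adj G w ->
  (run adj G w = Some G0 \/ run adj G w = Some (opp G0)) ->
  forall i, i \in w ->
    let pre := take (index i w) w in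
    let P1 := forall j, adj i j -> j \notin pre in
    let P2 := forall j, adj i j -> count_mem j pre = 1 in
    (P1 /\ ~ P2) \/ (~ P1 /\ P2).
Proof.
move=> [sym _ conn _] cardV OG _ altG0 Rw RwG0 i iw pre P1 P2.
set suf := drop (index i w).+1 w.
have Ew : w = pre ++ i :: suf by rewrite -drop_index ?cat_take_drop.
have ipre : i \notin pre by rewrite /pre in_take_leq ?index_size ?ltnn.
have [F [RwF sosF]] : exists F, run adj G w = Some F /\ src_or_sink adj F i.
  by case: RwG0 => ->; [exists G0 | exists (opp G0)]; rewrite ?src_or_sink_opp.
have Rw' : reduced adj G (pre ++ i :: suf) by rewrite -Ew.
have RwF' : run adj G (pre ++ i :: suf) = Some F by rewrite -Ew.
have [n ni] := connected_has_neighbor i conn cardV.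
have count_neighbor j : adj i j -> count_mem j pre = odd (count_mem n pre).
  move=> ij; have := reduced_count_before_first sym OG Rw' ipre ij.
  by rewrite -(parity_after_reflection sym OG RwF' sosF ipre ij ni); case: count => [|[|]].
have [on|en] := boolP (odd (count_mem n pre)); [right | left]; split.
- by move/(_ n ni)/count_memPn; rewrite count_neighbor ?on.
- by move=> j ij; rewrite count_neighbor ?on.
- by move=> j ij; apply/count_memPn; rewrite count_neighbor ?(negbTE en).
- by move/(_ n ni); rewrite count_neighbor ?(negbTE en).
Qed.
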